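(* For all $a,a'\in\mathbb F_{3^m}$, the vectors $(\mathrm{Tr}_{2m}(at^{3^m+1}))_{t\in\mathbb F_{3^{2m}}}$ and $(\mathrm{Tr}_{2m}(at^{3^m+1})\,\mathrm{Tr}_{2m}(a't^{3^m+1}))_{t\in\mathbb F_{3^{2m}}}$ belong to $\mathcal C_3(\mathbb D_d)$.
   Context: Let $m\ge 2$ be an integer. For $s\in\{m,2m\}$ let $\mathrm{Tr}_s:\mathbb F_{3^s}\to\mathbb F_3$ denote the absolute trace. Vectors in $\mathbb F_3^{3^{2m}}$ are indexed by $\mathbb F_{3^{2m}}$, and a function $f:\mathbb F_{3^{2m}}\to\mathbb F_3$ is identified with $(f(t))_{t\in\mathbb F_{3^{2m}}}$. Let $\mathcal C(2m,3)=\{(\mathrm{Tr}_{2m}(at^{3^m+1}+bt)+h)_{t\in\mathbb F_{3^{2m}}}: a\in\mathbb F_{3^m}, b\in\mathbb F_{3^{2m}}, h\in\mathbb F_3\}$, let $d$ be its minimum nonzero Hamming weight, let $\mathbb D_d$ be the incidence structure on $\mathbb F_{3^{2m}}$ whose blocks are the supports of the weight-$d$ codewords, and let $\mathcal C_3(\mathbb D_d)$ be the $\mathbb F_3$-span of the incidence vectors of the blocks (entry $1$ on the block, $0$ elsewhere). *)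

From HB Require Import structures.
From mathcomp Require Import all_boot all_order all_algebra all_field.
Set Implicit Arguments. Unset Strict Implicit. Unset Printing Implicit Defensive.
Import GRing.Theory.
Local Open Scope ring_scope.

(* Setting: F is a finite field of characteristic 3 with #|F| = 3^(2m),
   i.e. a model of F_{3^{2m}}.  The prime field F_3 is identified with the
   prime subfield {x : F | x^3 = x}, and F_{3^m} with {x : F | x^(3^m) = x}.
   Vectors in F_3^{3^{2m}} indexed by F are modelled as {ffun F -> F} whose
   entries lie in the prime subfield. *)

Section Code.
Variables (m : nat) (F : finFieldType).

Definition inF3 (x : F) : bool := x ^+ 3 == x.
Definition inFm (x : F) : bool := x ^+ (3 ^ m) == x.

Definition Tr (x : F) : F := \sum_(i < 2 * m) x ^+ (3 ^ i).

Definition codeC : {set {ffun F -> F}} :=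
  [set f : {ffun F -> F} | [exists a : F, exists b : F, exists h : F,
     [&& inFm a, inF3 h &
      f == [ffun t => Tr (a * t ^+ (3 ^ m + 1) + b * t) + h]]]].

Definition supp (f : {ffun F -> F}) : {set F} := [set t | f t != 0].
Definition wt (f : {ffun F -> F}) : nat := #|supp f|.

Definition min_wt_word (f : {ffun F -> F}) : bool :=
  [&& f \in codeC, f != 0 &
      [forall g in codeC, (g != 0) ==> (wt f <= wt g)%N]].

Definition blocksD : {set {set F}} := [set supp f | f in [pred f | min_wt_word f]].

Definition incv (B : {set F}) : {ffun F -> F} := [ffun t => (t \in B)%:R].

Definition in_C3D (v : {ffun F -> F}) : Prop :=
  exists lam : {set F} -> F,
    (forall B, inF3 (lam B)) /\
    forall t : F, v t = \sum_(B in blocksD) lam B * incv B t.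

End Code.

From mathcomp Require Import all_boot all_order all_algebra all_field.
From mathcomp Require Import ring zify.
Set Implicit Arguments. Unset Strict Implicit. Unset Printing Implicit Defensive.
Import GRing.Theory.
Local Open Scope ring_scope.

(* Let F be a field with q^2 elements, q = 3^m, m >= 2, let Fq be its subfield
   of order q, Nm t = t^(q+1) the norm to Fq, and G_a t = Tr(a * Nm t).
   The proof has two halves.

   Every nonzero additive F_3-valued function on a finite
   additive group takes each value of F_3 equally often.  Counting the fibres
   of the norm (with root bounds for X^q - X and X^(q+1) - 1) shows #|Fq| = q
   and that every nonzero element of Fq has q + 1 preimages; hence for
   a in Fq^*, t |-> Tr(a * Nm t) takes a nonzero value c exactly (q+1)q/3
   times and the value 0 fewer times.  Completing the square turns every
   codeword with a != 0 into such a function, so every nonzero codeword has at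
   most (q+1)q/3 zeros, and the words g_{a,h} = G_a + h (a in Fq^*, h = +-1)
   attain this bound: their supports B(a,h) are blocks of D_d.

   Pointwise, 1_B(a,1) - 1_B(a,-1) = G_a and 1_B(a,1) + 1_B(a,-1)
   = 2 - G_a^2.  Summing the latter over a in Fq^* gives the constant 1 (here
   m >= 2 makes the number of a with G_a t != 0 divisible by 3), whence G_a^2
   is in the span, and so is G_a * G_b = G_(a+b)^2 - G_(a-b)^2 in
   characteristic 3. *)

Section Lemma3p8.
Variables (m : nat) (F : finFieldType).
Hypothesis charF : 3%N \in [pchar F].
Hypothesis cardF : #|F| = (3 ^ (2 * m))%N.
Hypothesis m_ge2 : (2 <= m)%N.

Lemma frobD k (x y : F) : (x + y) ^+ (3 ^ k) = x ^+ (3 ^ k) + y ^+ (3 ^ k).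
Proof.
by apply: exprDn_pchar; rewrite (eq_pnat _ (pcharf_eq charF)) pnatX pnat_id.
Qed.

Lemma frob0 k : (0 : F) ^+ (3 ^ k) = 0.
Proof. by rewrite expr0n expn_eq0. Qed.

Lemma frobN k (x : F) : (- x) ^+ (3 ^ k) = - x ^+ (3 ^ k).
Proof. by apply/eqP; rewrite -subr_eq0 opprK -frobD addNr frob0. Qed.

Lemma frob_sum k (I : finType) (f : I -> F) :
  (\sum_i f i) ^+ (3 ^ k) = \sum_i f i ^+ (3 ^ k).
Proof. exact: (big_morph (fun x : F => x ^+ (3 ^ k)) (frobD k) (frob0 k)). Qed.

Lemma frob_card (x : F) : x ^+ (3 ^ (2 * m)) = x.
Proof. by rewrite -cardF expf_card. Qed.

Lemma char3_eq0 : (3%:R : F) = 0.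
Proof. exact: pcharf0 charF. Qed.

Lemma natr_dvd3 n : (3 %| n)%N -> (n%:R : F) = 0.
Proof. by case/dvdnP=> k ->; rewrite natrM char3_eq0 mulr0. Qed.

Lemma eq_mod3 (x y k : F) : x - y = k * 3%:R -> x = y.
Proof. by rewrite char3_eq0 mulr0 => /eqP; rewrite subr_eq0 => /eqP. Qed.

Lemma two_neq0 : (2%:R : F) != 0.
Proof. by rewrite -(dvdn_pcharf charF). Qed.

Lemma TrD (x y : F) : Tr m (x + y) = Tr m x + Tr m y.
Proof. by rewrite /Tr -big_split; apply: eq_bigr => i _; rewrite frobD. Qed.

Lemma Tr0 : Tr m (0 : F) = 0.
Proof. by rewrite /Tr big1 // => i _; rewrite frob0. Qed.

Lemma TrN (x : F) : Tr m (- x) = - Tr m x.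
Proof. by rewrite /Tr -sumrN; apply: eq_bigr => i _; rewrite frobN. Qed.

Lemma Tr_cube (x : F) : Tr m (x ^+ 3) = Tr m x.
Proof.
rewrite /Tr; have -> : (2 * m = (2 * m).-1.+1)%N by lia.
rewrite big_ord_recr big_ord_recl /=.
under eq_bigr do rewrite -exprM -expnS.
under [in RHS]eq_bigr do rewrite /bump leq0n add1n.
by rewrite -exprM -expnS prednK ?frob_card ?expr1 1?addrC //; lia.
Qed.

Lemma Tr_frob k (x : F) : Tr m (x ^+ (3 ^ k)) = Tr m x.
Proof.
elim: k => [|k IH]; first by rewrite expr1.
by rewrite expnSr exprM Tr_cube IH.
Qed.

Lemma Tr_F3 (x : F) : inF3 (Tr m x).
Proof.
apply/eqP; rewrite -[X in _ ^+ X]expn1 frob_sum -[RHS]Tr_cube.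
by apply: eq_bigr => i _; rewrite -!exprM mulnC.
Qed.

Lemma F3_cases (x : F) : inF3 x -> [\/ x = 0, x = 1 | x = -1].
Proof.
move/eqP=> x3; have e : x * (x - 1) * (x + 1) = x ^+ 3 - x by ring.
have : x * (x - 1) * (x + 1) = 0 by rewrite e x3 subrr.
move/eqP; rewrite !mulf_eq0 subr_eq0 addr_eq0 -orbA.
by case/or3P=> /eqP ->; [apply: Or31 | apply: Or32 | apply: Or33].
Qed.

Lemma one_neqN1 : (1 : F) != -1.
Proof. by rewrite -subr_eq0 opprK two_neq0. Qed.

Lemma inF3D (x y : F) : inF3 x -> inF3 y -> inF3 (x + y).
Proof. by rewrite /inF3 -[3%N]expn1 frobD => /eqP -> /eqP ->. Qed.

Lemma inF3M (x y : F) : inF3 x -> inF3 y -> inF3 (x * y).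
Proof. by rewrite /inF3 exprMn => /eqP -> /eqP ->. Qed.

Lemma inF3N (x : F) : inF3 x -> inF3 (- x).
Proof. by rewrite /inF3 -[3%N]expn1 frobN => /eqP ->. Qed.

Lemma inF3nat n : inF3 (n%:R : F).
Proof.
elim: n => [|n IH]; first by rewrite /inF3 expr0n.
by rewrite -addn1 natrD inF3D // /inF3 expr1n.
Qed.

Lemma inF3N1 : inF3 (-1 : F).
Proof. exact: inF3N (inF3nat 1). Qed.

Lemma sqr_F3 (x : F) : inF3 x -> x ^+ 2 = (x != 0)%:R.
Proof.
case/F3_cases=> ->; rewrite ?eqxx ?oner_eq0 ?oppr_eq0 ?oner_eq0 //=.
- by rewrite expr0n.
- by rewrite expr1n.
- by rewrite sqrrN expr1n.
Qed.


Lemma card_roots_lt (p : {poly F}) (A : {set F}) :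
  p != 0 -> (forall x, x \in A -> root p x) -> (#|A| < size p)%N.
Proof.
move=> p0 hA; rewrite cardE; apply: max_poly_roots => //; last exact: enum_uniq.
by apply/allP => x; rewrite mem_enum; apply: hA.
Qed.

Lemma size_sum_frob k :
  size (\sum_(i < k.+1) 'X^(3 ^ i) : {poly F}) = (3 ^ k).+1.
Proof.
elim: k => [|k IH]; first by rewrite big_ord1 size_polyXn.
by rewrite big_ord_recr /= addrC size_polyDl size_polyXn // IH ltnS ltn_exp2l.
Qed.

(* A set with more than 3^k elements contains an element y with
   y + y^3 + ... + y^(3^k) != 0; this makes traces nonzero. *)
Lemma exists_sum_frob_neq0 (A : {set F}) k : (3 ^ k < #|A|)%N ->
  exists2 y, y \in A & \sum_(i < k.+1) y ^+ (3 ^ i) != 0.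
Proof.
move=> hk; apply/exists_inP; rewrite -negb_forall_in; apply/negP => /forall_inP h.
pose P : {poly F} := \sum_(i < k.+1) 'X^(3 ^ i).
have P0 : P != 0 by rewrite -size_poly_eq0 size_sum_frob.
suff : (#|A| < size P)%N by rewrite size_sum_frob ltnS leqNgt hk.
apply: card_roots_lt P0 _ => x /h e; rewrite /root /P horner_sum.
by under eq_bigr do rewrite hornerXn.
Qed.

Lemma card_transl (A B : {set F}) (s : F -> F) :
  injective s -> (forall x, (s x \in B) = (x \in A)) -> #|A| = #|B|.
Proof.
move=> s_inj hs; rewrite -(card_preimset B s_inj); apply: eq_card => x.
by rewrite !inE hs.
Qed.

Lemma sum_eq_card (S : {set F}) (f : F -> F) c :
  (\sum_(x in S) (f x == c : nat) = #|[set x in S | f x == c]|)%N.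
Proof. by rewrite -sum1dep_card big_mkcondr. Qed.

Lemma sum_neq_card (S : {set F}) (f : F -> F) c :
  (\sum_(x in S) (f x != c : nat) = #|S| - #|[set x in S | f x == c]|)%N.
Proof.
rewrite -sum_eq_card -sum1_card.
have -> : (\sum_(x in S) 1 = \sum_(x in S) ((f x != c : nat) + (f x == c : nat)))%N.
  by apply: eq_bigr => x _; case: eqP.
by rewrite big_split /= addnK.
Qed.

Lemma card_F3_fibres (S : {set F}) (f : F -> F) :
  (forall x, x \in S -> inF3 (f x)) ->
  #|S| = (#|[set x in S | f x == 0%R]| + #|[set x in S | f x == 1%R]|
          + #|[set x in S | f x == (-1)%R]|)%N.
Proof.
move=> f3; rewrite -!sum_eq_card -!big_split /= -sum1_card.
apply: eq_bigr => x xS; have nN10 : (-1 : F) != 0 by rewrite oppr_eq0 oner_eq0.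
case: (F3_cases (f3 _ xS)) => ->; rewrite !eqxx.
- by rewrite eq_sym oner_eq0 eq_sym (negbTE nN10).
- by rewrite oner_eq0 (negbTE one_neqN1).
- by rewrite (negbTE nN10) eq_sym (negbTE one_neqN1).
Qed.

Section Balance.
Variables (S : {set F}) (f : F -> F).
Hypothesis S_addr : forall x y, x \in S -> y \in S -> x + y \in S.
Hypothesis S_oppr : forall x, x \in S -> - x \in S.
Hypothesis fD : forall x y, x \in S -> y \in S -> f (x + y) = f x + f y.
Hypothesis f_F3 : forall x, x \in S -> inF3 (f x).

Lemma additive_fN x : x \in S -> f (- x) = - f x.
Proof.
move=> xS; have S0 : 0 \in S by rewrite -(addrN x) S_addr ?S_oppr.
have f0 : f 0 = 0 by apply: (@addrI _ (f 0)); rewrite -fD ?addr0.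
by apply/eqP; rewrite -addr_eq0 -fD ?S_oppr // addNr f0.
Qed.

(* Translation by y maps the zero fibre onto the fibre of f y. *)
Lemma card_fibre_transl y : y \in S ->
  #|[set x in S | f x == f y]| = #|[set x in S | f x == 0]|.
Proof.
move=> yS; apply/esym/(card_transl (s := fun x => x + y)); first exact: addIr.
move=> x; rewrite !inE; case xS: (x \in S).
  by rewrite S_addr //= fD // -subr_eq0 addrK.
case xyS: (x + y \in S) => //.
by move: xS; rewrite -(addrK y x) S_addr ?S_oppr.
Qed.

Lemma card_F3_balanced : (exists2 x, x \in S & f x != 0) ->
  forall c, inF3 c -> #|S| = (3 * #|[set x in S | f x == c]|)%N.
Proof.
case=> x0 x0S fx0 c c3.
have [x1 x1S fx1] : exists2 x1, x1 \in S & f x1 = 1.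
  case: (F3_cases (f_F3 x0S)) => fx0E; first by rewrite fx0E eqxx in fx0.
    by exists x0.
  by exists (- x0); rewrite ?S_oppr // additive_fN // fx0E opprK.
have c1 := card_fibre_transl x1S; rewrite fx1 in c1.
have cN1 := card_fibre_transl (S_oppr x1S); rewrite additive_fN // fx1 in cN1.
rewrite (card_F3_fibres f_F3) c1 cN1.
by case: (F3_cases c3) => ->; rewrite ?c1 ?cN1; lia.
Qed.

End Balance.


Definition Fq : {set F} := [set x | inFm m x].
Definition Nm (t : F) : F := t ^+ (3 ^ m + 1).
Definition Nm_fibre (x : F) : {set F} := [set t | Nm t == x].

Lemma expn_m_sqr : (3 ^ m * 3 ^ m = 3 ^ (2 * m))%N.
Proof. by rewrite -expnD mul2n addnn. Qed.

Lemma expn_m_gt1 : (1 < 3 ^ m)%N.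
Proof. by rewrite -{1}(expn0 3) ltn_exp2l //; lia. Qed.

Lemma expn_m_pred : (3 ^ m = 3 * 3 ^ m.-1)%N.
Proof. by rewrite -expnS prednK //; lia. Qed.

Lemma expn_m_pred2 : (3 ^ m.-1 = 3 * 3 ^ m.-2)%N.
Proof. by rewrite -expnS -subn2 -subn1 subnSK //; lia. Qed.

Lemma inFqE x : (x \in Fq) = (x ^+ (3 ^ m) == x).
Proof. by rewrite inE. Qed.

Lemma Fq0 : (0 : F) \in Fq. Proof. by rewrite inFqE frob0. Qed.

Lemma FqD x y : x \in Fq -> y \in Fq -> x + y \in Fq.
Proof. by rewrite !inFqE frobD => /eqP -> /eqP ->. Qed.

Lemma FqN x : x \in Fq -> - x \in Fq.
Proof. by rewrite !inFqE frobN => /eqP ->. Qed.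

Lemma FqM x y : x \in Fq -> y \in Fq -> x * y \in Fq.
Proof. by rewrite !inFqE exprMn => /eqP -> /eqP ->. Qed.

Lemma FqV x : x \in Fq -> x^-1 \in Fq.
Proof. by rewrite !inFqE exprVn => /eqP ->. Qed.

Lemma Nm_Fq t : Nm t \in Fq.
Proof.
rewrite inFqE /Nm -exprM mulnDl mul1n exprD expn_m_sqr frob_card.
by rewrite addnC exprD expr1.
Qed.

Lemma Nm_eq0 t : (Nm t == 0) = (t == 0).
Proof. by rewrite /Nm expf_eq0 addn1. Qed.

(* Fq consists of roots of X^q - X. *)
Lemma card_Fq_le : (#|Fq| <= 3 ^ m)%N.
Proof.
pose P : {poly F} := 'X^(3 ^ m) - 'X.
have sP : size P = (3 ^ m).+1.
  by rewrite /P size_polyDl size_polyXn // size_polyN size_polyX ltnS expn_m_gt1.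
have P0 : P != 0 by rewrite -size_poly_eq0 sP.
rewrite -ltnS -sP; apply: card_roots_lt P0 _ => x.
by rewrite inFqE /root /P !hornerE subr_eq0.
Qed.

(* The norm-one elements are roots of X^(q+1) - 1. *)
Lemma card_Nm_fibre1_le : (#|Nm_fibre 1%R| <= 3 ^ m + 1)%N.
Proof.
pose P : {poly F} := 'X^(3 ^ m + 1) - 1.
have sP : size P = (3 ^ m + 1).+1 by rewrite /P size_XnsubC // addn1.
have P0 : P != 0 by rewrite -size_poly_eq0 sP.
rewrite -ltnS -sP; apply: card_roots_lt P0 _ => x.
by rewrite inE /root /P !hornerE subr_eq0.
Qed.

(* A nonempty fibre over x != 0 is a coset of the norm-one group. *)
Lemma card_Nm_fibre_transl x t0 : t0 != 0 -> Nm t0 = x ->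
  #|Nm_fibre x| = #|Nm_fibre 1|.
Proof.
move=> t00 ht0; apply/esym/(card_transl (s := fun t => t * t0)).
  exact: mulIf.
have x0 : x != 0 by rewrite -ht0 Nm_eq0.
move=> t; rewrite !inE /Nm exprMn -/(Nm t0) ht0.
by rewrite -{2}(mul1r x) (inj_eq (mulIf x0)).
Qed.

Lemma card_Nm_fibre0 : #|Nm_fibre 0| = 1%N.
Proof. by rewrite -(cards1 (0 : F)); apply: eq_card => t; rewrite !inE Nm_eq0. Qed.

Lemma card_Nm_fibre_notFq x : x \notin Fq -> #|Nm_fibre x| = 0%N.
Proof.
move=> xFq; apply/eqP; rewrite cards_eq0; apply/eqP/setP => t; rewrite !inE.
by apply: contraNF xFq => /eqP <-; rewrite Nm_Fq.
Qed.

Lemma card_Nm_fibre_le x : (#|Nm_fibre x| <= #|Nm_fibre 1%R|)%N.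
Proof.
have [->|[t0]] := set_0Vmem (Nm_fibre x); first by rewrite cards0.
rewrite inE => /eqP ht0; have [t00|t00] := eqVneq t0 0.
  move: ht0; rewrite t00 /Nm expr0n addn1 /= => <-; rewrite card_Nm_fibre0 card_gt0.
  by apply/set0Pn; exists 1; rewrite inE /Nm expr1n.
by rewrite (card_Nm_fibre_transl t00 ht0).
Qed.

Lemma sum_card_Nm_fibres :
  (1 + \sum_(x in Fq :\ 0%R) #|Nm_fibre x| = 3 ^ m * 3 ^ m)%N.
Proof.
have fibreE x : #|Nm_fibre x| = (\sum_t (Nm t == x : nat))%N.
  by rewrite -sum1dep_card big_mkcond.
have total : (\sum_x #|Nm_fibre x| = #|F|)%N.
  rewrite (eq_bigr _ (fun x _ => fibreE x)) exchange_big /= -sum1_card.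
  apply: eq_bigr => t _; rewrite (bigD1 (Nm t)) //= eqxx big1 // => x.
  by rewrite eq_sym => /negbTE ->.
rewrite expn_m_sqr -cardF -total [RHS](bigD1 (0 : F)) //= card_Nm_fibre0.
congr (_ + _)%N; rewrite [RHS](bigID (mem Fq)) /= [X in addn _ X]big1 ?addn0.
  by apply: eq_bigl => x; rewrite !inE andbC.
by move=> x /andP[_ xFq]; rewrite card_Nm_fibre_notFq.
Qed.

(* Comparing the sum above with the root bounds forces equality in both. *)
Lemma card_Fq_Nm_fibres : #|Fq| = (3 ^ m)%N /\
  forall x, x \in Fq -> x != 0 -> #|Nm_fibre x| = (3 ^ m + 1)%N.
Proof.
have total := sum_card_Nm_fibres; set E := Fq :\ 0 in total.
have le_sum : (\sum_(x in E) #|Nm_fibre x| <= #|E| * #|Nm_fibre 1%R|)%N.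
  by rewrite -sum_nat_const; apply: leq_sum => x _; apply: card_Nm_fibre_le.
have cardE : #|Fq| = (1 + #|E|)%N by rewrite (cardsD1 0) Fq0.
have := card_Fq_le; have := card_Nm_fibre1_le; have := expn_m_gt1.
set S := (\sum_(x in E) _)%N in total le_sum; set q := (3 ^ m)%N in total cardE *.
set e := #|E| in le_sum cardE; set k := #|Nm_fibre 1| in le_sum * => q_gt1 k_le e_le.
have e_eq : e = (q - 1)%N.
  apply/eqP; rewrite eqn_leq; apply/andP; split; first lia.
  rewrite leqNgt; apply/negP => e_lt.
  have : (e * k <= (q - 2) * (q + 1))%N by apply: leq_mul; lia.
  nia.
have k_eq : k = (q + 1)%N.
  by apply/eqP; rewrite eqn_leq k_le /=; rewrite e_eq in le_sum; nia.
split=> [|x xFq x0]; first lia.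
have xE : x \in E by rewrite in_setD1 x0 xFq.
rewrite -k_eq; apply/eqP; rewrite eqn_leq card_Nm_fibre_le /= leqNgt.
apply/negP => lt; have : (S < e * k)%N.
  rewrite /S /e -sum_nat_const (bigD1 x) //= [X in (_ < X)%N](bigD1 x) //=.
  by rewrite -addSn leq_add //; apply: leq_sum => y _; apply: card_Nm_fibre_le.
nia.
Qed.

Lemma card_Fq : #|Fq| = (3 ^ m)%N.
Proof. by case: card_Fq_Nm_fibres. Qed.

Lemma card_Nm_fibre x : x \in Fq -> x != 0 -> #|Nm_fibre x| = (3 ^ m + 1)%N.
Proof. by case: card_Fq_Nm_fibres => _; apply. Qed.


Lemma Tr_Fq y : y \in Fq -> Tr m y = 2%:R * \sum_(i < m) y ^+ (3 ^ i).
Proof.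
rewrite inFqE => /eqP yFq; rewrite /Tr mul2n -addnn big_split_ord /=.
rewrite mulr_natl mulr2n; congr (_ + _); apply: eq_bigr => i _.
by rewrite expnD exprM yFq.
Qed.

Lemma Tr_Fq_neq0 : exists2 y, y \in Fq & Tr m y != 0.
Proof.
have lt : (3 ^ m.-1 < #|Fq|)%N.
  by rewrite card_Fq expn_m_pred; have := expn_gt0 3 m.-1; lia.
have [y yFq] := exists_sum_frob_neq0 lt; rewrite prednK; last lia.
by exists y; rewrite // Tr_Fq // mulf_neq0 // two_neq0.
Qed.

Lemma Tr_neq0 : exists y : F, Tr m y != 0.
Proof.
have lt : (3 ^ (2 * m).-1 < #|[set: F]|)%N.
  rewrite cardsT cardF -{2}(prednK (_ : 0 < 2 * m)%N); last lia.
  by rewrite ltn_exp2l.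
by have [y _] := exists_sum_frob_neq0 lt; rewrite prednK; [exists y | lia].
Qed.

Lemma card_Tr_Fq a c : a \in Fq -> a != 0 -> inF3 c ->
  (3 * #|[set x in Fq | Tr m (a * x)%R == c]| = 3 ^ m)%N.
Proof.
move=> aFq a0 c3; rewrite -card_Fq; apply/esym/card_F3_balanced => //.
- exact: FqD.
- exact: FqN.
- by move=> x y _ _; rewrite mulrDr TrD.
- by move=> x _; apply: Tr_F3.
have [y yFq Try] := Tr_Fq_neq0; exists (a^-1 * y); first by rewrite FqM ?FqV.
by rewrite mulrA mulfV // mul1r.
Qed.

Lemma card_Tr_F b c : b != 0 -> inF3 c ->
  (3 * #|[set x in [set: F] | Tr m (b * x)%R == c]| = #|F|)%N.
Proof.
move=> b0 c3; rewrite -cardsT; apply/esym/card_F3_balanced => //.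
- by move=> *; rewrite in_setT.
- by move=> *; rewrite in_setT.
- by move=> x y _ _; rewrite mulrDr TrD.
- by move=> x _; apply: Tr_F3.
have [y Try] := Tr_neq0; exists (b^-1 * y); first by rewrite inE.
by rewrite mulrA mulfV // mul1r.
Qed.

(* Counting the t with P (Nm t) through the fibres of the norm. *)
Lemma card_Nm_preim (P : pred F) :
  #|[set t | P (Nm t)]| =
    (P 0%R + (3 ^ m + 1) * (#|[set x in Fq | P x]| - P 0%R))%N.
Proof.
set E := Fq :\ 0.
have byfibres : #|[set t | P (Nm t)]| = (\sum_x P x * #|Nm_fibre x|)%N.
  rewrite -sum1dep_card (partition_big Nm xpredT) //=.
  apply: eq_bigr => x _; rewrite sum1dep_card; case Px: (P x).
    rewrite mul1n; apply: eq_card => t; rewrite !inE.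
    by case: eqP => [->|]; rewrite ?Px ?andbF ?andbT.
  rewrite mul0n; apply/eqP; rewrite cards_eq0; apply/eqP/setP => t; rewrite !inE.
  by case: eqP => [->|]; rewrite ?Px ?andbF.
have overE : (\sum_x P x * #|Nm_fibre x| =
              P 0%R + (3 ^ m + 1) * #|[set x in E | P x]|)%N.
  rewrite (bigD1 (0 : F)) //= card_Nm_fibre0 muln1; congr (_ + _)%N.
  rewrite (bigID (mem Fq)) /= [X in addn _ X]big1 ?addn0; last first.
    by move=> x /andP[_ xFq]; rewrite card_Nm_fibre_notFq // muln0.
  rewrite -sum1dep_card big_distrr /= big_mkcond [RHS]big_mkcond /=.
  apply: eq_bigr => x _; rewrite !inE.
  case: eqP => [->|/eqP x0] //=; case xFq: (inFm m x) => //=.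
  by rewrite card_Nm_fibre ?inFqE //; case: (P x) => /=; lia.
have splitFq : #|[set x in Fq | P x]| = (P 0%R + #|[set x in E | P x]|)%N.
  have Fm0 : inFm m (0 : F) by have := Fq0; rewrite inE.
  rewrite (cardsD1 (0 : F)) !inE Fm0 /=; congr (_ + _)%N.
  by apply: eq_card => x; rewrite !inE andbA.
by rewrite byfibres overE splitFq; case: (P 0) => /=; lia.
Qed.

Lemma card_Tr_Nm a c : a \in Fq -> a != 0 -> inF3 c ->
  #|[set t | Tr m (a * Nm t) == c]| =
    ((c == 0%R) + (3 ^ m + 1) * (3 ^ m.-1 - (c == 0%R)))%N.
Proof.
move=> aFq a0 c3.
rewrite (card_Nm_preim (fun x => Tr m (a * x) == c)) /= mulr0 Tr0 eq_sym.
have := card_Tr_Fq aFq a0 c3; rewrite expn_m_pred => h.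
by have -> : #|[set x in Fq | Tr m (a * x) == c]| = (3 ^ m.-1)%N by lia.
Qed.

Lemma card_Tr_Nm_le a c : a \in Fq -> a != 0 -> inF3 c ->
  (#|[set t | Tr m (a * Nm t)%R == c]| <= (3 ^ m + 1) * 3 ^ m.-1)%N.
Proof.
move=> aFq a0 c3; rewrite card_Tr_Nm //; have := expn_gt0 3 m.-1.
by case: (c == 0) => /=; nia.
Qed.

Lemma card_Tr_Nm_neq0 a c : a \in Fq -> a != 0 -> inF3 c -> c != 0 ->
  #|[set t | Tr m (a * Nm t) == c]| = ((3 ^ m + 1) * 3 ^ m.-1)%N.
Proof. by move=> aFq a0 c3 c0; rewrite card_Tr_Nm // (negbTE c0) subn0. Qed.


Definition cw (a b h : F) : {ffun F -> F} :=
  [ffun t => Tr m (a * t ^+ (3 ^ m + 1) + b * t) + h].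

Definition num_zeros (f : {ffun F -> F}) : nat := #|[set t | f t == 0]|.

Lemma wt_num_zeros f : (wt f + num_zeros f)%N = #|F|.
Proof.
rewrite /wt /num_zeros -(cardsC (supp f)); congr (_ + _)%N.
by apply: eq_card => t; rewrite !inE negbK.
Qed.

Lemma codeCP f : reflect
  (exists a b h, [/\ inFm m a, inF3 h & f = cw a b h]) (f \in codeC m F).
Proof.
apply: (iffP idP) => [|[a [b [h [ha hh ->]]]]].
  rewrite inE => /existsP [a /existsP [b /existsP [h /and3P [ha hh /eqP ->]]]].
  by exists a, b, h.
by rewrite inE; apply/existsP; exists a; apply/existsP; exists b; apply/existsP;
   exists h; rewrite ha hh eqxx.
Qed.

Lemma Nm_addr t u :
  Nm (t + u) = Nm t + t ^+ (3 ^ m) * u + u ^+ (3 ^ m) * t + Nm u.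
Proof. by rewrite /Nm !exprD !expr1 frobD; ring. Qed.

(* Completing the square: for a in Fq^*, translating t by
   u = (b / (2a))^q turns Tr(a Nm t + b t) into Tr(a Nm (t + u)) minus a
   constant. *)
Lemma Tr_complete_square a b u t : a \in Fq -> a != 0 ->
  u = (b / (2%:R * a)) ^+ (3 ^ m) ->
  Tr m (a * Nm (t + u)) = Tr m (a * Nm t + b * t) + Tr m (a * Nm u).
Proof.
rewrite inFqE => /eqP aFq a0 uE.
have uq : u ^+ (3 ^ m) = b / (2%:R * a) by rewrite uE -exprM expn_m_sqr frob_card.
have cross : Tr m (a * (t ^+ (3 ^ m) * u)) = Tr m (a * (u ^+ (3 ^ m) * t)).
  rewrite -(Tr_frob m (a * (u ^+ (3 ^ m) * t))) !exprMn aFq -exprM expn_m_sqr.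
  by rewrite frob_card; congr (Tr m _); ring.
have double : Tr m (a * (u ^+ (3 ^ m) * t)) + Tr m (a * (u ^+ (3 ^ m) * t))
              = Tr m (b * t).
  by rewrite -TrD uq; congr (Tr m _); field; rewrite a0 two_neq0.
by rewrite Nm_addr !mulrDr !TrD cross -double; ring.
Qed.

Lemma num_zeros_le f : f \in codeC m F -> f != 0 ->
  (num_zeros f <= (3 ^ m + 1) * 3 ^ m.-1)%N.
Proof.
case/codeCP => a [b [h [ha hh ->]]] f0; have aFq : a \in Fq by rewrite inE.
have [a0|a0] := eqVneq a 0; last first.
  pose u := (b / (2%:R * a)) ^+ (3 ^ m).
  have -> : num_zeros (cw a b h) =
      #|[set t | Tr m (a * Nm (t + u)) == Tr m (a * Nm u) - h]|.
    apply: eq_card => t; rewrite !inE ffunE -/(Nm t).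
    rewrite (Tr_complete_square t aFq a0 (erefl u)) -[in RHS]subr_eq0.
    by congr (_ == 0); ring.
  rewrite (card_transl (B := [set s | Tr m (a * Nm s) == Tr m (a * Nm u) - h])
                       (s := fun t => t + u)).
  - exact: card_Tr_Nm_le (inF3D (Tr_F3 _) (inF3N hh)).
  - exact: addIr.
  - by move=> t; rewrite !inE.
subst a; have [b0|b0] := eqVneq b 0.
  have h0 : h != 0.
    apply: contraNneq f0 => h0; apply/eqP/ffunP => t.
    by rewrite !ffunE b0 !mul0r addr0 Tr0 h0 add0r.
  rewrite /num_zeros (_ : [set t | _] = set0) ?cards0 //; apply/setP => t.
  by rewrite !inE ffunE b0 !mul0r addr0 Tr0 add0r (negbTE h0).
have zerosE : num_zeros (cw 0 b h) = #|[set x in [set: F] | Tr m (b * x) == - h]|.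
  by apply: eq_card => t; rewrite !inE ffunE mul0r add0r addr_eq0.
have := card_Tr_F b0 (inF3N hh); rewrite -zerosE cardF -expn_m_sqr expn_m_pred.
by have := expn_gt0 3 m.-1; nia.
Qed.

Definition block (a h : F) : {set F} := supp (cw a 0 h).

Lemma num_zeros_cw a h : a \in Fq -> a != 0 -> inF3 h -> h != 0 ->
  num_zeros (cw a 0 h) = ((3 ^ m + 1) * 3 ^ m.-1)%N.
Proof.
move=> aFq a0 hh h0; rewrite -(card_Tr_Nm_neq0 aFq a0 (inF3N hh)) ?oppr_eq0 //.
by apply: eq_card => t; rewrite !inE ffunE mul0r addr0 addr_eq0.
Qed.

Lemma min_wt_cw a h : a \in Fq -> a != 0 -> inF3 h -> h != 0 ->
  min_wt_word m (cw a 0 h).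
Proof.
move=> aFq a0 hh h0; have ha : inFm m a by move: aFq; rewrite inE.
have zeros := num_zeros_cw aFq a0 hh h0.
apply/and3P; split; first by apply/codeCP; exists a, 0, h.
  apply/eqP => cw0; move: zeros; rewrite cw0 /num_zeros.
  rewrite (_ : [set t | _] = setT); last by apply/setP => t; rewrite !inE ffunE eqxx.
  by rewrite cardsT cardF -expn_m_sqr expn_m_pred; have := expn_gt0 3 m.-1; nia.
apply/forall_inP => g gC; apply/implyP => g0.
have := num_zeros_le gC g0; have := wt_num_zeros g.
by have := wt_num_zeros (cw a 0 h); rewrite zeros; lia.
Qed.

Lemma block_in_blocksD a h : a \in Fq -> a != 0 -> inF3 h -> h != 0 ->
  block a h \in blocksD m F.
Proof. by move=> aFq a0 hh h0; apply: imset_f; rewrite inE min_wt_cw. Qed.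


Definition in_span (v : F -> F) : Prop := in_C3D m (finfun v).

Lemma in_span_ext v w : in_span v -> (forall t, v t = w t) -> in_span w.
Proof.
by case=> lam [lam3 vE] vw; exists lam; split=> // t; rewrite ffunE -vw -vE ffunE.
Qed.

Lemma in_span0 : in_span (fun _ => 0).
Proof.
exists (fun _ => 0); split=> [B|t]; first exact: (inF3nat 0).
by rewrite ffunE big1 // => B _; rewrite mul0r.
Qed.

Lemma in_spanD v w : in_span v -> in_span w -> in_span (fun t => v t + w t).
Proof.
case=> [l1 [l1_3 vE]] [l2 [l2_3 wE]]; exists (fun B => l1 B + l2 B); split.
  by move=> B; apply: inF3D.
move=> t; rewrite ffunE -[v t](ffunE v) -[w t](ffunE w) vE wE -big_split /=.
by apply: eq_bigr => B _; rewrite mulrDl.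
Qed.

Lemma in_spanZ c v : inF3 c -> in_span v -> in_span (fun t => c * v t).
Proof.
move=> c3 [l [l3 vE]]; exists (fun B => c * l B); split.
  by move=> B; apply: inF3M.
move=> t; rewrite ffunE -[v t](ffunE v) vE mulr_sumr.
by apply: eq_bigr => B _; rewrite mulrA.
Qed.

Lemma in_spanB v w : in_span v -> in_span w -> in_span (fun t => v t - w t).
Proof.
move=> hv /(in_spanZ inF3N1) hw; apply: in_span_ext (in_spanD hv hw) _ => t.
by rewrite mulN1r.
Qed.

Lemma in_span_sum (I : finType) (P : pred I) (v : I -> F -> F) :
  (forall i, P i -> in_span (v i)) -> in_span (fun t => \sum_(i | P i) v i t).
Proof.
move=> hv; rewrite /index_enum; elim: (Finite.enum I) => [|i s IH].
  by apply: in_span_ext in_span0 _ => t; rewrite big_nil.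
case Pi: (P i).
  by apply: in_span_ext (in_spanD (hv i Pi) IH) _ => t; rewrite big_cons Pi.
by apply: in_span_ext IH _ => t; rewrite big_cons Pi.
Qed.

Lemma in_span_incv B : B \in blocksD m F -> in_span (incv B).
Proof.
move=> hB; exists (fun B' => (B' == B)%:R); split=> [B'|t]; first exact: inF3nat.
rewrite ffunE (bigD1 B) //= eqxx mul1r big1 ?addr0 // => B' /andP[_ nB].
by rewrite (negbTE nB) mul0r.
Qed.

Definition G (a t : F) : F := Tr m (a * t ^+ (3 ^ m + 1)).

Lemma G_F3 a t : inF3 (G a t).
Proof. exact: Tr_F3. Qed.

Lemma incv_block a h t : incv (block a h) t = (G a t + h != 0)%:R.
Proof. by rewrite /incv !ffunE inE ffunE mul0r addr0. Qed.

Lemma incv_block_sub a t :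
  incv (block a 1) t - incv (block a (-1)) t = G a t.
Proof.
have nN10 : (-1 : F) != 0 by rewrite oppr_eq0 oner_eq0.
rewrite !incv_block; case: (F3_cases (G_F3 a t)) => ->.
- by rewrite add0r oner_eq0 add0r (negbTE nN10) subrr.
- by rewrite addrN eqxx two_neq0 subr0.
- by rewrite addNr eqxx -opprD oppr_eq0 two_neq0 sub0r.
Qed.

Lemma incv_block_add a t :
  incv (block a 1) t + incv (block a (-1)) t = 2%:R - G a t ^+ 2.
Proof.
have nN10 : (-1 : F) != 0 by rewrite oppr_eq0 oner_eq0.
rewrite !incv_block; case: (F3_cases (G_F3 a t)) => ->.
- by rewrite add0r oner_eq0 add0r (negbTE nN10) expr0n subr0.
- by rewrite addrN eqxx two_neq0 expr1n addr0 -addrA subrr addr0.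
- by rewrite addNr eqxx -opprD oppr_eq0 two_neq0 sqrrN expr1n add0r -addrA subrr addr0.
Qed.

(* Summing G_a(t)^2 over Fq counts the a with G_a(t) != 0; for t != 0 there
   are 2q/3 of them, a multiple of 3 because m >= 2. *)
Lemma sum_sqr_G t : \sum_(a in Fq) G a t ^+ 2 = 0.
Proof.
rewrite /G -/(Nm t); have [t0|t0] := eqVneq (Nm t) 0.
  by rewrite big1 // => a _; rewrite t0 mulr0 Tr0 expr0n.
under eq_bigr do rewrite sqr_F3 ?Tr_F3 // mulrC.
rewrite -natr_sum sum_neq_card natr_dvd3 //.
have F3_0 : inF3 (0 : F) by rewrite /inF3 expr0n.
have := card_Tr_Fq (Nm_Fq t) t0 F3_0; rewrite card_Fq expn_m_pred.
rewrite expn_m_pred2; set C := #|_| => h; rewrite -/C.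
by apply/dvdnP; exists (3 * 3 ^ m.-2 - 3 ^ m.-2)%N; lia.
Qed.

Lemma sum_incv_blocks t :
  \sum_(a in Fq :\ 0) (incv (block a 1) t + incv (block a (-1)) t) = 1.
Proof.
under eq_bigr do rewrite incv_block_add.
have total : \sum_(a in Fq) (2%:R - G a t ^+ 2) = 0.
  rewrite sumrB sum_sqr_G subr0 sumr_const card_Fq expn_m_pred mulnC mulrnA.
  by rewrite -(mulr_natr (2 *+ _) 3) char3_eq0 mulr0.
rewrite (big_setD1 0 Fq0) /= /G mul0r Tr0 expr0n subr0 in total.
have -> : \sum_(a in Fq :\ 0) (2%:R - G a t ^+ 2) = - 2%:R.
  by apply/eqP; rewrite -addr_eq0 addrC total.
by apply: (eq_mod3 (k := -1)); ring.
Qed.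

Lemma in_span_block a h : a \in Fq -> a != 0 -> inF3 h -> h != 0 ->
  in_span (incv (block a h)).
Proof. by move=> *; apply/in_span_incv/block_in_blocksD. Qed.

Lemma in_span_blocks_pm1 a : a \in Fq -> a != 0 ->
  in_span (incv (block a 1)) /\ in_span (incv (block a (-1))).
Proof.
move=> aFq a0; split; apply: in_span_block => //; rewrite ?oppr_eq0 ?oner_eq0 //.
- exact: (inF3nat 1).
- exact: inF3N1.
Qed.

Lemma in_span_G a : a \in Fq -> in_span (G a).
Proof.
move=> aFq; have [->|a0] := eqVneq a 0.
  by apply: in_span_ext in_span0 _ => t; rewrite /G mul0r Tr0.
have [h1 hN1] := in_span_blocks_pm1 aFq a0.
by apply: in_span_ext (in_spanB h1 hN1) _ => t; rewrite incv_block_sub.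
Qed.

Lemma in_span_one : in_span (fun _ => 1).
Proof.
have covering : in_span (fun t =>
    \sum_(a in Fq :\ 0) (incv (block a 1) t + incv (block a (-1)) t)).
  apply: in_span_sum => a; rewrite !inE => /andP[a0 aFm].
  have aFq : a \in Fq by rewrite inE.
  by have [h1 hN1] := in_span_blocks_pm1 aFq a0; apply: in_spanD.
by apply: in_span_ext covering _ => t; apply: sum_incv_blocks.
Qed.

Lemma in_span_sqr_G a : a \in Fq -> in_span (fun t => G a t ^+ 2).
Proof.
move=> aFq; have [->|a0] := eqVneq a 0.
  by apply: in_span_ext in_span0 _ => t; rewrite /G mul0r Tr0 expr0n.
have [h1 hN1] := in_span_blocks_pm1 aFq a0.
apply: in_span_ext (in_spanB (in_spanD in_span_one in_span_one) (in_spanD h1 hN1)) _.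
by move=> t; rewrite incv_block_add; ring.
Qed.

(* Polarization in characteristic 3: 4xy = xy. *)
Lemma in_span_mul_G a b : a \in Fq -> b \in Fq -> in_span (fun t => G a t * G b t).
Proof.
move=> aFq bFq.
have hp := in_span_sqr_G (FqD aFq bFq); have hm := in_span_sqr_G (FqD aFq (FqN bFq)).
apply: in_span_ext (in_spanB hp hm) _ => t.
have GD c d : G (c + d) t = G c t + G d t by rewrite /G mulrDl TrD.
rewrite !GD /G mulNr TrN -/(G a t) -/(G b t).
by symmetry; apply: (eq_mod3 (k := - (G a t * G b t))); ring.
Qed.

End Lemma3p8.

Theorem lemma3p8 (m : nat) (F : finFieldType) :
  (2 <= m)%N -> (3%N \in [pchar F]) -> #|F| = (3 ^ (2 * m))%N ->
  forall a a' : F, inFm m a -> inFm m a' ->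
    in_C3D m [ffun t : F => Tr m (a * t ^+ (3 ^ m + 1))] /\
    in_C3D m [ffun t : F => Tr m (a * t ^+ (3 ^ m + 1)) *
                            Tr m (a' * t ^+ (3 ^ m + 1))].
Proof.
move=> m_ge2 charF cardF a a' ha ha'.
have aFq : a \in Fq m F by rewrite inE.
have a'Fq : a' \in Fq m F by rewrite inE.
split; [exact: in_span_G | exact: in_span_mul_G].
Qed.
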